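(* Let $X$ be a Hausdorff topological space, $\Phi$ a local semiflow on $X$, and $\mathscr A$ an attractor of $\Phi$ with region of attraction $\Omega=\Omega(\mathscr A)$. Assume $\mathscr A$ is closed and has a $\mathcal K_0$ function $\zeta$ on $\Omega$. Then $\mathscr A$ has a Lyapunov function $L$ on $\Omega$. If in addition $X$ is normal, then for any closed subset $K$ of $X$ with $K\subset\Omega\setminus\mathscr A$, there exists a Lyapunov function $L$ of $\mathscr A$ such that $L(x)\ge1$ for all $x\in K$.
   Context: A local semiflow $\Phi$ on $X$ is a continuous map from an open subset $\mathcal D_\Phi\subset\mathbb R^+\times X$ to $X$ such that: (i) for each $x$ there is $T_x\in(0,\infty]$ with $(t,x)\in\mathcal D_\Phi$ iff $t\in[0,T_x)$; (ii) $\Phi(0,x)=x$; (iii) if $(t+s,x)\in\mathcal D_\Phi$ with $t,s\ge0$ then $\Phi(t+s,x)=\Phi(t,\Phi(s,x))$. Write $\Phi(t)x=\Phi(t,x)$, $\Phi(t)M=\{\Phi(t)x:x\in M,\ t<T_x\}$. Convention: $U$ is a neighborhood of $A$ if $\overline A\subset\mathrm{int}\,U$. A set $K$ is invariant if $\Phi(t)K\subset K$ and $K\subset\Phi(t)K$ for all $t\ge0$. $K$ attracts $B$ if $T_x=\infty$ for all $x\in B$ and for every neighborhood $V$ of $K$ there is $t_0>0$ with $\Phi(t)B\subset V$ for all $t>t_0$. A set is s-compact if every sequence in it has a subsequence converging to a point of the set. An attractor is a nonempty s-compact invariant set $\mathscr A$ for which there is a neighborhood $N$ of $\mathscr A$ such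 that $\mathscr A$ attracts $N$ and every s-compact invariant subset of $N$ is contained in $\mathscr A$; $\Omega(\mathscr A)=\{x:\mathscr A\text{ attracts }\{x\}\}$. A $\mathcal K_0$ function of $\mathscr A$ is a nonnegative continuous function $\zeta$ on $\Omega$ with $\zeta(x)=0\iff x\in\mathscr A$. A Lyapunov function of $\mathscr A$ is a $\mathcal K_0$ function $L$ of $\mathscr A$ with $L(\Phi(t)x)<L(x)$ for all $x\in\Omega\setminus\mathscr A$ and $t>0$. *)

From HB Require Import structures.
From mathcomp Require Import all_boot all_order all_algebra.
From mathcomp Require Import all_classical all_reals all_analysis.
Set Implicit Arguments. Unset Strict Implicit. Unset Printing Implicit Defensive.
Import Order.TTheory GRing.Theory Num.Theory.
Import numFieldNormedType.Exports.
Local Open Scope classical_set_scope.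
Local Open Scope ring_scope.

Section semiflow.
Context {R : realType} {X : topologicalType}.

(* A local semiflow is given by a total function Phi : R -> X -> X together
   with the escape times T : X -> \bar R; the domain is
   D = {(t,x) | 0 <= t < T x}.  Only values on D are meaningful. *)
Definition sf_dom (T : X -> \bar R) : set (R * X) :=
  [set p | 0 <= p.1 /\ (p.1%:E < T p.2)%E].

Definition local_semiflow (Phi : R -> X -> X) (T : X -> \bar R) : Prop :=
  [/\
      (exists U : set (R * X), open U /\
         sf_dom T = U `&` [set p | 0 <= p.1]),
      {within sf_dom T, continuous (fun p : R * X => Phi p.1 p.2)},
      (forall x, (0 < T x)%E),
      (forall x, Phi 0 x = x) &
      (forall t s x, 0 <= t -> 0 <= s -> ((t + s)%:E < T x)%E ->
         (t%:E < T (Phi s x))%E /\ Phi (t + s) x = Phi t (Phi s x))].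

Definition sf_image (Phi : R -> X -> X) (T : X -> \bar R) (t : R) (M : set X)
  : set X := [set Phi t x | x in [set x | M x /\ (t%:E < T x)%E]].

Definition nbhd_of (U A : set X) : Prop := closure A `<=` interior U.

Definition invariant (Phi : R -> X -> X) (T : X -> \bar R) (K : set X) : Prop :=
  forall t, 0 <= t -> sf_image Phi T t K `<=` K /\ K `<=` sf_image Phi T t K.

Definition attracts (Phi : R -> X -> X) (T : X -> \bar R) (K B : set X) : Prop :=
  (forall x, B x -> T x = +oo%E) /\
  forall V : set X, nbhd_of V K ->
    exists2 t0 : R, 0 < t0 & forall t, t0 < t -> sf_image Phi T t B `<=` V.

Definition s_compact (K : set X) : Prop :=
  forall u : nat -> X, (forall n, K (u n)) ->
    exists phi : nat -> nat, {homo phi : m n / (m < n)%N} /\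
      exists2 x, K x & (u \o phi) @ \oo --> x.

Definition attractor (Phi : R -> X -> X) (T : X -> \bar R) (A : set X) : Prop :=
  [/\ A !=set0, s_compact A, invariant Phi T A &
      exists N : set X, [/\ nbhd_of N A, attracts Phi T A N &
        forall K : set X, K `<=` N -> s_compact K -> invariant Phi T K ->
          K `<=` A]].

Definition region_of_attraction (Phi : R -> X -> X) (T : X -> \bar R)
  (A : set X) : set X := [set x | attracts Phi T A [set x]].

Definition K0_function (Phi : R -> X -> X) (T : X -> \bar R) (A : set X)
  (zeta : X -> R) : Prop :=
  let Omega := region_of_attraction Phi T A in
  [/\ {within Omega, continuous zeta},
      (forall x, Omega x -> 0 <= zeta x) &
      (forall x, Omega x -> (zeta x = 0 <-> A x))].

Definition Lyapunov_function (Phi : R -> X -> X) (T : X -> \bar R) (A : set X)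
  (L : X -> R) : Prop :=
  K0_function Phi T A L /\
  forall x t, region_of_attraction Phi T A x -> ~ A x -> 0 < t ->
    L (Phi t x) < L x.

End semiflow.

From HB Require Import structures.
From mathcomp Require Import all_boot all_order all_algebra.
From mathcomp Require Import all_classical all_reals all_analysis.
From mathcomp Require Import lra.
Import Order.TTheory GRing.Theory Num.Theory.
Import numFieldNormedType.Exports.
Set Implicit Arguments. Unset Strict Implicit. Unset Printing Implicit Defensive.
Local Open Scope classical_set_scope.
Local Open Scope ring_scope.

(** L(x) = sup_(t >= 0) (2 - e^(-t)) zeta(Phi(t) x).
   Attraction of a neighbourhood of A together with continuity of the flow
   makes zeta(Phi(t) y) uniformly small for t large and y near x, so the
   supremum is in effect taken over a compact time interval; this makes L
   finite and continuous on the region of attraction. Since the weight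
   2 - e^(-t) is strictly increasing and bounded by 2, shifting an orbit by
   tau > 0 shrinks its weights up to any finite time by a fixed factor c < 1,
   whence L(Phi(tau) x) <= c L(x). For the second statement, adding to zeta
   an Urysohn function that vanishes on A and equals 1 on K gives a K0
   function that is >= 1 on K, and L >= zeta. *)

Section lyap_weight.
Context {R : realType}.

Definition lyap_weight (t : R) : R := 2 - expR (- t).

Lemma continuous_lyap_weight : continuous lyap_weight.
Proof.
move=> t; apply: cvgB; first exact: cvg_cst.
apply: (continuous_comp (f := -%R)); first exact: continuousN.
exact: continuous_expR.
Qed.

Lemma lyap_weight0 : lyap_weight 0 = 1.
Proof. by rewrite /lyap_weight oppr0 expR0; lra. Qed.

Lemma lyap_weight_le2 t : lyap_weight t <= 2.
Proof. by rewrite /lyap_weight; have := expR_gt0 (- t); lra. Qed.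

Lemma lyap_weight_ge1 t : 0 <= t -> 1 <= lyap_weight t.
Proof.
move=> t0; have : expR (- t) <= expR 0 by rewrite ler_expR; lra.
by rewrite /lyap_weight expR0; lra.
Qed.

(* c = 1 - d/2, where d = e^(-S) (1 - e^(-tau)) bounds below what the weight
   gains under a shift by tau before time S. *)
Lemma lyap_weight_contract tau S : 0 < tau -> 0 <= S ->
  exists c, [/\ 1 / 2 <= c, c < 1 &
    forall t, 0 <= t -> t + tau <= S -> lyap_weight t <= c * lyap_weight (t + tau)].
Proof.
move=> tau0 S0; pose d := expR (- S) * (1 - expR (- tau)).
have eS0 : 0 < expR (- S) := expR_gt0 (- S).
have eS1 : expR (- S) <= 1 by rewrite -expR0 ler_expR; lra.
have et0 : 0 < expR (- tau) := expR_gt0 (- tau).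
have et1 : expR (- tau) < 1 by rewrite -expR0 ltr_expR; lra.
have d0 : 0 < d by rewrite mulr_gt0 //; lra.
have d1 : d < 1 by rewrite /d; nra.
exists (1 - d / 2); split; [lra | lra |].
move=> t t0 tS; have w2 := lyap_weight_le2 (t + tau).
suff : lyap_weight t + d <= lyap_weight (t + tau) by nra.
have : expR (- S) <= expR (- t) by rewrite ler_expR; lra.
by rewrite /lyap_weight /d opprD expRD; nra.
Qed.

End lyap_weight.

Section nbhs_sections.
Context {U V : topologicalType}.

Lemma nbhs_pairr (a : U) (b : V) (P : set (U * V)) :
  nbhs (a, b) P -> nbhs b (fun y => P (a, y)).
Proof.
move=> [[Ua Vb] [/= Uaa Vbb] UVP]; apply: filterS Vbb => y Vy.
by apply: (UVP (a, y)); split => //; exact: nbhs_singleton.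
Qed.

Lemma nbhs_pairl (a : U) (b : V) (P : set (U * V)) :
  nbhs (a, b) P -> nbhs a (fun s => P (s, b)).
Proof.
move=> [[Ua Vb] [/= Uaa Vbb] UVP]; apply: filterS Uaa => s Us.
by apply: (UVP (s, b)); split => //; exact: nbhs_singleton.
Qed.

End nbhs_sections.

Section nbhd_of.
Context {X : topologicalType}.

Lemma nbhd_of_interior (N A : set X) : nbhd_of N A -> A `<=` interior N.
Proof. by move=> NA a Aa; apply: NA; exact: subset_closure. Qed.

Lemma open_nbhd_of (V A : set X) : closed A -> open V -> A `<=` V -> nbhd_of V A.
Proof. by move=> cA oV AV; rewrite /nbhd_of -(closure_id A).1 // (interior_id V).1. Qed.

End nbhd_of.

Section region_of_attraction.
Context {R : realType} {X : topologicalType}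
  (Phi : R -> X -> X) (T : X -> \bar R) (A : set X).

Let Om := region_of_attraction Phi T A.

Lemma attracts_sub_region N : attracts Phi T A N -> N `<=` Om.
Proof.
move=> [NT Nat] y Ny; split; first by move=> z ->; exact: NT.
move=> V nV; have [t0 t00 H] := Nat V nV; exists t0 => // t tt0 w [z [-> zt] <-].
by apply: (H t tt0); exists y.
Qed.

Lemma region_escape x : Om x -> T x = +oo%E.
Proof. by move=> [H _]; exact: H. Qed.

Lemma region_dom x t : Om x -> 0 <= t -> sf_dom T (t, x).
Proof. by move=> Ox t0; split => //=; rewrite region_escape ?ltry. Qed.

Lemma region_image x t : Om x -> 0 <= t -> sf_image Phi T t [set x] (Phi t x).
Proof. by move=> Ox t0; exists x => //; split => //; rewrite region_escape ?ltry. Qed.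

Hypothesis hsf : local_semiflow Phi T.

Lemma semiflowD x t s : T x = +oo%E -> 0 <= t -> 0 <= s ->
  Phi t (Phi s x) = Phi (t + s) x.
Proof.
move=> Tx t0 s0; have [_ _ _ _ flowD] := hsf.
have : ((t + s)%R%:E < T x)%E by rewrite Tx ltry.
by move=> /(flowD t s x t0 s0) [].
Qed.

(* A finite escape time r of Phi(s) x would contradict (iii) at time
   |r| + 1 + s, which lies in the domain since T x = +oo. *)
Lemma region_flow x s : Om x -> 0 <= s -> Om (Phi s x).
Proof.
move=> Ox s0; have [_ _ T_gt0 _ flowD] := hsf.
have Tx : T (Phi s x) = +oo%E.
  case Tr : (T (Phi s x)) => [r| |] //; last by have := T_gt0 (Phi s x); rewrite Tr.
  have r0 : 0 <= `|r| + 1 by rewrite addr_ge0.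
  have : ((`|r| + 1 + s)%R%:E < T x)%E by rewrite region_escape ?ltry.
  move=> /(flowD _ s x r0 s0) [+ _]; rewrite Tr lte_fin.
  by move=> abs; exfalso; have := ler_norm r; lra.
split; first by move=> z ->.
move=> V nV; case: (Ox) => _ /(_ V nV) [t0 t00 Ht0].
exists t0 => // t tt0 _ [z [-> _] <-]; have t_ge0 : 0 <= t by lra.
rewrite semiflowD ?region_escape //; apply: (Ht0 (t + s)); first lra.
by apply: region_image => //; lra.
Qed.

Lemma semiflow_cvg p : sf_dom T p ->
  (fun q => Phi q.1 q.2) @ within (sf_dom T) (nbhs p) --> Phi p.1 p.2.
Proof. by case: hsf => _ /subspace_continuousP + _ _ _; apply. Qed.

Let E := [set p : R * X | 0 <= p.1 /\ Om p.2].

Lemma region_flow_cvg p : E p ->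
  (fun q => Phi q.1 q.2) @ within E (nbhs p) --> within Om (nbhs (Phi p.1 p.2)).
Proof.
move=> [p0 Op] P /= HP.
have := semiflow_cvg (region_dom Op p0) HP; rewrite /within /= !nbhs_simpl /=.
apply: filterS => q H [q0 Oq]; apply: H; last exact: region_flow.
exact: region_dom.
Qed.

Lemma region_enter_near x N : Om x -> nbhd_of N A ->
  exists2 t, 0 <= t & \forall y \near x, Om y -> N (Phi t y).
Proof.
move=> Ox NA; have intNA : nbhd_of (interior N) A.
  by move=> a /NA; rewrite (interior_id (interior N)).1 //; exact: open_interior.
have [_ /(_ _ intNA) [t1 t10 Ht1]] := Ox.
have t1_ge0 : 0 <= t1 + 1 by lra.
have intN : interior N (Phi (t1 + 1) x).
  by apply: (Ht1 (t1 + 1)); [lra | exact: region_image].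
have := semiflow_cvg (region_dom Ox t1_ge0)
  (open_nbhs_nbhs (conj (open_interior N) intN)).
move/nbhs_pairr => near_x; exists (t1 + 1) => //.
apply: filterS near_x => y Hy Oy; apply: interior_subset.
exact: Hy (region_dom Oy t1_ge0).
Qed.

Hypothesis hatt : attractor Phi T A.

Lemma attractor_nbhd : exists N, nbhd_of N A /\ attracts Phi T A N.
Proof. by case: hatt => _ _ _ [N [NA aN _]]; exists N. Qed.

Lemma attractor_sub_region : A `<=` Om.
Proof.
have [N [NA aN]] := attractor_nbhd => a Aa; apply: (attracts_sub_region aN).
exact: nbhs_singleton (nbhd_of_interior NA Aa).
Qed.

Lemma attractor_flow x t : A x -> 0 <= t -> A (Phi t x).
Proof.
move=> Ax t0; case: hatt => _ _ /(_ t t0) [+ _] _; apply.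
exists x => //; split => //.
by rewrite region_escape ?ltry //; exact: attractor_sub_region.
Qed.

End region_of_attraction.

Section lyapunov.
Context {R : realType} {X : topologicalType}
  (Phi : R -> X -> X) (T : X -> \bar R) (A : set X) (zeta : X -> R).
Hypothesis hsf : local_semiflow Phi T.
Hypothesis hatt : attractor Phi T A.
Hypothesis hcl : closed A.
Hypothesis hz : K0_function Phi T A zeta.

Let Om := region_of_attraction Phi T A.
Let E := [set p : R * X | 0 <= p.1 /\ Om p.2].

Lemma K0_ge0 x : Om x -> 0 <= zeta x.
Proof. by case: hz => _ + _; apply. Qed.

Lemma K0_eq0 x : Om x -> zeta x = 0 <-> A x.
Proof. by case: hz => _ _; apply. Qed.

Lemma K0_cvg x : Om x -> zeta @ within Om (nbhs x) --> zeta x.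
Proof. by case: hz => /subspace_continuousP + _ _; apply. Qed.

Lemma K0_sublevel_nbhd e : 0 < e ->
  nbhd_of (interior [set y | Om y -> zeta y < e]) A.
Proof.
move=> e0; apply: open_nbhd_of => //; first exact: open_interior.
move=> a Aa; have Oa := attractor_sub_region hatt Aa.
by apply: (cvgr_lt (zeta a) (K0_cvg Oa)); rewrite (K0_eq0 Oa).2.
Qed.

Lemma K0_flow_small x e : Om x -> 0 < e -> exists2 S, 0 < S &
  \forall y \near x, Om y -> forall t, S < t -> zeta (Phi t y) < e.
Proof.
move=> Ox e0; have [N [NA [NT Nat]]] := attractor_nbhd hatt.
have [t0 t0_gt0 Ht0] := Nat _ (K0_sublevel_nbhd e0).
have [t1 t1_ge0 near_x] := region_enter_near hsf Ox NA.
exists (t0 + t1); first lra.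
apply: filterS near_x => y /[swap] Oy /(_ Oy) Ny t tt; have t_ge0 : 0 <= t by lra.
have Phi_t : Phi (t - t1) (Phi t1 y) = Phi t y.
  by rewrite (semiflowD hsf) ?subrK ?(region_escape Oy) //; lra.
have : interior [set y | Om y -> zeta y < e] (Phi t y).
  rewrite -Phi_t; apply: (Ht0 (t - t1)); first lra.
  by exists (Phi t1 y) => //; split => //; rewrite NT ?ltry.
by move/interior_subset; apply; exact: region_flow.
Qed.

Definition lyap_profile y t := lyap_weight t * zeta (Phi t y).

Definition lyap x := sup [set lyap_profile x t | t in [set t : R | 0 <= t]].

Lemma lyap_profile0 x : lyap_profile x 0 = zeta x.
Proof. by case: hsf => _ _ _ Phi0 _; rewrite /lyap_profile lyap_weight0 Phi0 mul1r. Qed.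

Lemma lyap_profile_le x t : Om x -> 0 <= t -> lyap_profile x t <= 2 * zeta (Phi t x).
Proof.
move=> Ox t0; apply: ler_wpM2r; last exact: lyap_weight_le2.
exact: K0_ge0 (region_flow hsf Ox t0).
Qed.

Lemma lyap_profile_cvg p e : E p -> 0 < e ->
  \forall q \near p, E q -> `|lyap_profile p.2 p.1 - lyap_profile q.2 q.1| < e.
Proof.
move=> Ep e0; suff : (fun q => lyap_profile q.2 q.1) @ within E (nbhs p) -->
    lyap_profile p.2 p.1 by move/cvgrPdist_lt; apply.
apply: cvgM.
  apply: cvg_within_filter; apply: (continuous_comp (f := fst)).
    exact: cvg_fst.
  exact: continuous_lyap_weight.
apply: cvg_comp (region_flow_cvg hsf Ep) _.
by case: Ep => p0 Op; exact: K0_cvg (region_flow hsf Op p0).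
Qed.

Lemma lyap_profile_continuous x S : Om x ->
  {within `[0, S], continuous (lyap_profile x)}.
Proof.
move=> Ox; apply/subspace_continuousP => t; rewrite /= in_itv /= => /andP [t0 _].
apply/cvgrPdist_lt => e e0.
have := nbhs_pairl (lyap_profile_cvg (p := (t, x)) (conj t0 Ox) e0).
apply: filterS => s Hs; rewrite /= in_itv /= => /andP [s0 _].
exact: Hs.
Qed.

Lemma lyap_profile_has_sup x : Om x ->
  has_sup [set lyap_profile x t | t in [set t : R | 0 <= t]].
Proof.
move=> Ox; split; first by exists (lyap_profile x 0), 0%R => /=.
have [S S0 small] := K0_flow_small Ox (@ltr01 R).
have [c c0S maxc] := EVT_max (ltW S0) (lyap_profile_continuous (S := S) Ox).
exists (Num.max (lyap_profile x c) 2) => _ [t /= t0 <-].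
have [tS|St] := leP t S.
  by rewrite le_max (maxc t) // in_itv /= t0 tS.
rewrite le_max; apply/orP; right.
have := lyap_profile_le Ox t0; have := nbhs_singleton small Ox t St; lra.
Qed.

Lemma lyap_ge x t : Om x -> 0 <= t -> lyap_profile x t <= lyap x.
Proof. by move=> Ox t0; apply: (ub_le_sup (lyap_profile_has_sup Ox).2); exists t. Qed.

Lemma lyap_le x c : (forall t, 0 <= t -> lyap_profile x t <= c) -> lyap x <= c.
Proof.
move=> H; apply: ge_sup; first by exists (lyap_profile x 0), 0%R => /=.
by move=> _ [t /= t0 <-]; exact: H.
Qed.

Lemma K0_le_lyap x : Om x -> zeta x <= lyap x.
Proof. by move=> Ox; rewrite -lyap_profile0; exact: lyap_ge. Qed.

Lemma lyap_ge0 x : Om x -> 0 <= lyap x.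
Proof. by move=> Ox; apply: le_trans (K0_le_lyap Ox); exact: K0_ge0. Qed.

Lemma lyap_eq0 x : Om x -> lyap x = 0 <-> A x.
Proof.
move=> Ox; split => [L0|Ax].
  apply/(K0_eq0 Ox)/eqP; rewrite eq_le K0_ge0 // andbT -L0.
  exact: K0_le_lyap.
apply/eqP; rewrite eq_le lyap_ge0 // andbT; apply: lyap_le => t t0.
rewrite /lyap_profile (K0_eq0 (region_flow hsf Ox t0)).2 ?mulr0 //.
exact: (attractor_flow hatt Ax t0).
Qed.

Lemma lyap_profile_near x S e : Om x -> 0 < e -> \forall y \near x,
  Om y -> forall t, 0 <= t <= S -> lyap_profile y t < lyap_profile x t + e.
Proof.
move=> Ox e0; have e2 : 0 < e / 2 by lra.
pose P y t := 0 <= t -> Om y -> lyap_profile y t < lyap_profile x t + e.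
have : \forall y \near x, `[0, S]%classic `<=` P y.
  move/compact_near_coveringP : (@segment_compact R 0 S); apply => t.
  rewrite /= in_itv /= => /andP [t0 _].
  have [[U V] [/= Ut Vx] UV] := lyap_profile_cvg (p := (t, x)) (conj t0 Ox) e2.
  exists (U, V) => //= -[s y] /= [Us Vy] s0 Oy.
  have := UV (s, y) (conj Us Vy) (conj s0 Oy).
  have := UV (s, x) (conj Us (nbhs_singleton Vx)) (conj s0 Ox).
  by rewrite /= !ltr_distlC => /andP [? _] /andP [_ ?]; lra.
apply: filterS => y Hy Oy t /andP [t0 tS].
by apply: Hy => //; rewrite /= in_itv /= t0 tS.
Qed.

Lemma lyap_near_le x e : Om x -> 0 < e ->
  \forall y \near x, Om y -> lyap y <= lyap x + e.
Proof.
move=> Ox e0; have e2 : 0 < e / 2 by lra.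
have [S S0 small] := K0_flow_small Ox e2.
apply: filterS2 small (lyap_profile_near S Ox e0) => y small_y near_y Oy.
apply: lyap_le => t t0; have [tS|St] := leP t S.
  have := near_y Oy t; rewrite t0 tS => /(_ isT).
  by have := lyap_ge Ox t0; lra.
have := lyap_profile_le Oy t0; have := small_y Oy t St; have := lyap_ge0 Ox.
lra.
Qed.

Lemma lyap_near_gt x e : Om x -> 0 < e ->
  \forall y \near x, Om y -> lyap x - e < lyap y.
Proof.
move=> Ox e0.
have [_ [t /= t0 <-]] := sup_adherent e0 (lyap_profile_has_sup Ox).
rewrite -/(lyap x) => close; have Ep : E (t, x) by [].
have := lyap_profile_cvg Ep (e := lyap_profile x t - (lyap x - e)) ltac:(lra).
move/nbhs_pairr; apply: filterS => y /= near_y Oy.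
have := near_y (conj t0 Oy); rewrite ltr_distlC => /andP [? _].
by have := lyap_ge Oy t0; lra.
Qed.

Lemma lyap_continuous : {within Om, continuous lyap}.
Proof.
apply/subspace_continuousP => x Ox; apply/cvgrPdist_lt => e e0.
suff : \forall y \near nbhs x, Om y -> `|lyap x - lyap y| < e by [].
have e2 : 0 < e / 2 by lra.
apply: filterS2 (lyap_near_le Ox e2) (lyap_near_gt Ox e2) => y le_y gt_y Oy.
have := le_y Oy; have := gt_y Oy; rewrite ltr_distlC => ? ?.
by apply/andP; split; lra.
Qed.

Lemma lyap_decreasing x tau : Om x -> ~ A x -> 0 < tau ->
  lyap (Phi tau x) < lyap x.
Proof.
move=> Ox nAx tau0; have L0 : 0 < lyap x.
  rewrite lt_neqAle lyap_ge0 // andbT eq_sym.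
  by apply/eqP => /(lyap_eq0 Ox).
have [S S0 small] := K0_flow_small Ox (e := lyap x / 4) ltac:(lra).
have [c [c_ge c_lt1 contract]] := lyap_weight_contract tau0 (ltW S0).
suff : lyap (Phi tau x) <= c * lyap x by nra.
apply: lyap_le => t t0; have Ot : Om (Phi (t + tau) x).
  by apply: (region_flow hsf) => //; lra.
have z0 := K0_ge0 Ot.
rewrite /lyap_profile (semiflowD hsf) ?(region_escape Ox) //; last exact: ltW.
have [tS|St] := leP (t + tau) S.
  have : lyap_profile x (t + tau) <= lyap x by apply: lyap_ge => //; lra.
  by have := contract t t0 tS; have := lyap_weight_ge1 t0; rewrite /lyap_profile; nra.
have := nbhs_singleton small Ox _ St; have := lyap_weight_le2 t.
have := lyap_weight_ge1 t0; nra.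
Qed.

Lemma lyapunov_lyap : Lyapunov_function Phi T A lyap.
Proof.
split; last by move=> x t Ox nAx t0; exact: lyap_decreasing.
by split; [exact: lyap_continuous | exact: lyap_ge0 | exact: lyap_eq0].
Qed.

End lyapunov.

Lemma K0_function_ge1 {R : realType} {X : topologicalType}
    (Phi : R -> X -> X) (T : X -> \bar R) (A K : set X) (zeta : X -> R) :
  normal_space X -> closed A -> closed K ->
  K `<=` region_of_attraction Phi T A `\` A -> K0_function Phi T A zeta ->
  exists zeta' : X -> R,
    K0_function Phi T A zeta' /\ forall x, K x -> 1 <= zeta' x.
Proof.
move=> nX cA cK KOm [zeta_cont zeta_ge0 zeta_eq0].
have AK0 : A `&` K = set0 by apply/seteqP; split => // x [Ax /KOm []].
have [u [u_cont uA uK u01]] := urysohn_ext_itv nX cA cK AK0 (@ltr01 R).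
have u_ge0 x : 0 <= u x.
  by have := u01 (u x) (imageT u x); rewrite /= in_itv => /andP [].
exists (zeta \+ u); split; last first.
  move=> x Kx; rewrite /= (uK (u x)); last by exists x.
  by have := zeta_ge0 x (KOm x Kx).1; lra.
split.
- apply/subspace_continuousP => x Ox; apply: cvgD.
    by move/subspace_continuousP : zeta_cont; apply.
  by apply: cvg_within_filter; exact: u_cont.
- by move=> x Ox; rewrite addr_ge0 ?zeta_ge0.
- move=> x Ox; split => [|Ax]; last first.
    by rewrite /= (zeta_eq0 x Ox).2 // (uA (u x)) ?add0r //; exists x.
  have := zeta_ge0 x Ox; have := u_ge0 x; move=> ? ? /= sum0.
  by apply/(zeta_eq0 x Ox); lra.
Qed.

Theorem theorem5p3 (R : realType) (X : topologicalType)
  (Phi : R -> X -> X) (T : X -> \bar R) (A : set X) :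
  hausdorff_space X ->
  local_semiflow Phi T ->
  attractor Phi T A ->
  closed A ->
  (exists zeta : X -> R, K0_function Phi T A zeta) ->
  (exists L : X -> R, Lyapunov_function Phi T A L) /\
  (@normal_space X ->
   forall K : set X, closed K ->
     K `<=` region_of_attraction Phi T A `\` A ->
     exists L : X -> R, Lyapunov_function Phi T A L /\
       (forall x, K x -> 1 <= L x)).
Proof.
move=> _ hsf hatt hcl [zeta hz]; split.
  by exists (lyap Phi zeta); exact: lyapunov_lyap.
move=> nX K cK KOm; have [zeta' [hz' ge1]] := K0_function_ge1 nX hcl cK KOm hz.
exists (lyap Phi zeta'); split; first exact: lyapunov_lyap.
move=> x Kx; apply: le_trans (ge1 x Kx) _.
exact: (K0_le_lyap hsf hatt hcl hz' (KOm x Kx).1).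
Qed.
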